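(* Let $D:\mathbb{R}^{n+1}\to\mathbb{R}^n$ be the difference map $D(b)=(b_2-b_1,b_3-b_2,\dots,b_{n+1}-b_n)^t$ and $D^\star:\mathbb{R}^n\to\mathbb{R}^{n+1}$ its transpose, $D^\star(a)=(-a_1,a_1-a_2,\dots,a_{n-1}-a_n,a_n)^t$. On $\mathbb{R}^n$ with the standard inner product define $\|a\|_X=\|D^\star a\|_1$ and $\|a\|_Y=\min\{\|b\|_\infty: b\in\mathbb{R}^{n+1},\ Db=a\}$. Then $\|\cdot\|_X$ and $\|\cdot\|_Y$ are norms dual to each other, and they are tight: every vector $c\in\mathbb{R}^n$ is tight.
   Context: For a norm $\|\cdot\|_X$ with dual norm $\|\cdot\|_Y$ on a euclidean space with $\|v\|_2=\sqrt{\langle v,v\rangle}$, and norms $\|\cdot\|_P,\|\cdot\|_Q$ among $X,Y,2$, a decomposition $c=a+b$ is a $PQ$-decomposition if for every decomposition $c=a'+b'$: $\|a'\|_P>\|a\|_P$, or $\|b'\|_Q>\|b\|_Q$, or $(\|a'\|_P,\|b'\|_Q)=(\|a\|_P,\|b\|_Q)$. A vector $c$ is tight if every $X2$-decomposition of $c$ is an $XY$-decomposition. *)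

(* Vectors in R^n are row vectors 'rV[R]_n; R is any real closed field
   (needed for Num.sqrt in the euclidean norm). *)
From HB Require Import structures.
From mathcomp Require Import all_boot all_order all_algebra.
Set Implicit Arguments. Unset Strict Implicit. Unset Printing Implicit Defensive.
Import Order.TTheory GRing.Theory Num.Theory.
Local Open Scope ring_scope.

Section Defs.
Variable R : rcfType.

(* Matrix of the difference map D : R^{n+1} -> R^n acting on row vectors:
   (b *m Dmat n) 0 i = b_{i+1} - b_i  (0-indexed). Its transpose gives D^*. *)
Definition Dmat (n : nat) : 'M[R]_(n.+1, n) :=
  \matrix_(j < n.+1, i < n)
    ((j == lift ord0 i)%:R - (j == widen_ord (leqnSn n) i)%:R).

Definition Dop (n : nat) (b : 'rV[R]_n.+1) : 'rV[R]_n := b *m Dmat n.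
Definition Dstar (n : nat) (a : 'rV[R]_n) : 'rV[R]_n.+1 := a *m (Dmat n)^T.

Definition dot (n : nat) (u v : 'rV[R]_n) : R := \sum_(i < n) u 0 i * v 0 i.
Definition norm1 (n : nat) (v : 'rV[R]_n) : R := \sum_(i < n) `|v 0 i|.
Definition norminf (n : nat) (v : 'rV[R]_n) : R := \big[Num.max/0]_(i < n) `|v 0 i|.
Definition norm2 (n : nat) (v : 'rV[R]_n) : R := Num.sqrt (dot v v).

Definition normX (n : nat) (a : 'rV[R]_n) : R := norm1 (Dstar a).

Definition is_normY (n : nat) (a : 'rV[R]_n) (y : R) : Prop :=
  (exists b : 'rV[R]_n.+1, Dop b = a /\ norminf b = y) /\
  (forall b : 'rV[R]_n.+1, Dop b = a -> y <= norminf b).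

Definition is_norm (n : nat) (N : 'rV[R]_n -> R) : Prop :=
  [/\ forall x, N x = 0 -> x = 0,
      forall (k : R) x, N (k *: x) = `|k| * N x &
      forall x y, N (x + y) <= N x + N y].

Definition is_sup (P : R -> Prop) (s : R) : Prop :=
  (forall z, P z -> z <= s) /\ (forall u, (forall z, P z -> z <= u) -> s <= u).

Definition is_dual (n : nat) (NX NY : 'rV[R]_n -> R) : Prop :=
  forall y, is_sup (fun z => exists x, NX x <= 1 /\ z = dot x y) (NY y).

Definition is_decomp (n : nat) (NP NQ : 'rV[R]_n -> R) (c a b : 'rV[R]_n) : Prop :=
  c = a + b /\
  forall a' b', c = a' + b' ->
    NP a < NP a' \/ NQ b < NQ b' \/ (NP a' = NP a /\ NQ b' = NQ b).

Definition tight (n : nat) (NX NY : 'rV[R]_n -> R) (c : 'rV[R]_n) : Prop :=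
  forall a b, is_decomp NX (@norm2 n) c a b -> is_decomp NX NY c a b.

End Defs.

From HB Require Import structures.
From mathcomp Require Import all_boot all_order all_algebra.
From mathcomp Require Import ring lra zify.
Set Implicit Arguments. Unset Strict Implicit. Unset Printing Implicit Defensive.
Import Order.TTheory GRing.Theory Num.Theory.
Local Open Scope ring_scope.

(* Through the adjunction <x, D b> = <D^* x, b>, the norms ||.||_X and ||.||_Y are ||.||_1 and
   ||.||_inf transported along D^* and D, so duality is Hoelder's inequality; it is attained at
   x with D^* x = (e_k - e_j) / 2 and at D of the sign vector of D^* y.  A preimage of a under D
   of least sup norm is any preimage recentred at its midrange: it oscillates between -||a||_Y
   and ||a||_Y.
   For tightness let c = a + b be an X2-decomposition and b = D beta with beta centred.  Moving
   mass inside D^* a shows that beta = ||b||_Y where D^* a > 0 and beta = -||b||_Y where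
   D^* a < 0.  Interpolating the signs of beta linearly between its extremal points gives w with
   ||w||_inf <= 1 such that z = D w satisfies <a, z> = ||a||_X and <b, z> = ||b||_Y ||z||_X, and
   such a z forbids any decomposition of c from improving both norms at once. *)

Section InnerProduct.
Variable R : rcfType.

Lemma dot_mx m (u v : 'rV[R]_m) : dot u v = (u *m v^T) 0 0.
Proof. by rewrite /dot mxE; apply: eq_bigr => i _; rewrite mxE. Qed.

Lemma dotC m (u v : 'rV[R]_m) : dot u v = dot v u.
Proof. by apply: eq_bigr => i _; rewrite mulrC. Qed.

Lemma dotDl m (u v w : 'rV[R]_m) : dot (u + v) w = dot u w + dot v w.
Proof. by rewrite /dot -big_split; apply: eq_bigr => i _; rewrite mxE mulrDl. Qed.

Lemma dotZl m k (u w : 'rV[R]_m) : dot (k *: u) w = k * dot u w.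
Proof. by rewrite /dot mulr_sumr; apply: eq_bigr => i _; rewrite mxE mulrA. Qed.

Lemma dotNl m (u w : 'rV[R]_m) : dot (- u) w = - dot u w.
Proof. by rewrite -scaleN1r dotZl mulN1r. Qed.

Lemma dotDr m (u v w : 'rV[R]_m) : dot w (u + v) = dot w u + dot w v.
Proof. by rewrite dotC dotDl !(dotC w). Qed.

Lemma dotZr m k (u w : 'rV[R]_m) : dot w (k *: u) = k * dot w u.
Proof. by rewrite dotC dotZl dotC. Qed.

Lemma dotNr m (u w : 'rV[R]_m) : dot w (- u) = - dot w u.
Proof. by rewrite dotC dotNl dotC. Qed.

Lemma dot0l m (w : 'rV[R]_m) : dot 0 w = 0.
Proof. by rewrite -(scale0r (0 : 'rV[R]_m)) dotZl mul0r. Qed.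

Lemma dot0r m (w : 'rV[R]_m) : dot w 0 = 0.
Proof. by rewrite dotC dot0l. Qed.

Lemma dot_delta m (p : 'I_m) (v : 'rV[R]_m) : dot (delta_mx 0 p) v = v 0 p.
Proof.
rewrite /dot (bigD1 p) //= big1 ?addr0 => [|i /negbTE Hi]; rewrite mxE.
  by rewrite !eqxx mul1r.
by rewrite Hi andbF mul0r.
Qed.

Lemma dot_ge0 m (u : 'rV[R]_m) : 0 <= dot u u.
Proof. by apply: sumr_ge0 => i _; rewrite -expr2 sqr_ge0. Qed.

Lemma dot_eq0 m (u : 'rV[R]_m) : dot u u = 0 -> u = 0.
Proof.
move=> /eqP; rewrite psumr_eq0 => [/allP u0|i _]; last by rewrite -expr2 sqr_ge0.
apply/rowP => i; rewrite mxE; apply/eqP.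
by rewrite -sqrf_eq0 expr2 (implyP (u0 i _)) // mem_index_enum.
Qed.

End InnerProduct.

Section Norms.
Variables (R : rcfType) (m : nat).
Implicit Types u v : 'rV[R]_m.

Lemma norm1_ge0 u : 0 <= norm1 u.
Proof. exact: sumr_ge0. Qed.

Lemma norm1D u v : norm1 (u + v) <= norm1 u + norm1 v.
Proof. by rewrite /norm1 -big_split; apply: ler_sum => i _; rewrite mxE ler_normD. Qed.

Lemma norm1Z k u : norm1 (k *: u) = `|k| * norm1 u.
Proof. by rewrite /norm1 mulr_sumr; apply: eq_bigr => i _; rewrite mxE normrM. Qed.

Lemma norm1N u : norm1 (- u) = norm1 u.
Proof. by rewrite -scaleN1r norm1Z normrN1 mul1r. Qed.

Lemma norm1_eq0 u : norm1 u = 0 -> u = 0.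
Proof.
move=> /eqP; rewrite psumr_eq0 // => /allP u0; apply/rowP => i; rewrite mxE.
by apply/eqP; rewrite -normr_eq0 (implyP (u0 i _)) // mem_index_enum.
Qed.

Lemma norm1_delta (p : 'I_m) : norm1 (delta_mx 0 p : 'rV[R]_m) = 1.
Proof.
rewrite /norm1 (bigD1 p) //= big1 ?addr0 => [|i /negbTE Hi]; rewrite mxE.
  by rewrite !eqxx normr1.
by rewrite Hi andbF normr0.
Qed.

Lemma norminf_ge0 u : 0 <= norminf u.
Proof. exact: bigmax_ge_id. Qed.

Lemma ler_norminf u i : `|u 0 i| <= norminf u.
Proof. exact: le_bigmax. Qed.

Lemma norminf_le u M : 0 <= M -> (forall i, `|u 0 i| <= M) -> norminf u <= M.
Proof. by move=> M0 uM; apply: bigmax_le. Qed.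

Lemma norminfD u v : norminf (u + v) <= norminf u + norminf v.
Proof.
apply: norminf_le => [|i]; first by rewrite addr_ge0 ?norminf_ge0.
by rewrite mxE (le_trans (ler_normD _ _)) // lerD ?ler_norminf.
Qed.

Lemma norminfZ k u : norminf (k *: u) <= `|k| * norminf u.
Proof.
apply: norminf_le => [|i]; first by rewrite mulr_ge0 ?norminf_ge0.
by rewrite mxE normrM ler_wpM2l ?ler_norminf.
Qed.

Lemma norminf_eq0 u : norminf u = 0 -> u = 0.
Proof.
move=> u0; apply/rowP => i; rewrite mxE; apply/eqP.
by rewrite -normr_le0 -u0 ler_norminf.
Qed.

Lemma norminf0 : norminf (0 : 'rV[R]_m) = 0.
Proof.
apply/le_anti; rewrite norminf_ge0 andbT.
by apply: norminf_le => // i; rewrite mxE normr0.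
Qed.

Lemma dot_le_norm1_norminf u v : dot u v <= norm1 u * norminf v.
Proof.
rewrite /dot /norm1 mulr_suml; apply: ler_sum => i _.
by rewrite (le_trans (ler_norm _)) // normrM ler_wpM2l ?ler_norminf.
Qed.

Lemma norm1_move_mass u (j k : 'I_m) (t : R) : 0 <= t <= u 0 j ->
  norm1 (u + t *: ('e_k - 'e_j)) <= norm1 u.
Proof.
move=> /andP[t0 tu].
have split_j : norm1 (u - t *: 'e_j) + t = norm1 u.
  rewrite /norm1 (bigD1 j) //= [in RHS](bigD1 j) //= !mxE !eqxx mulr1.
  rewrite (eq_bigr (fun l => `|u 0 l|)) => [|l /negbTE jl]; last first.
    by rewrite !mxE jl andbF mulr0 subr0.
  by rewrite !ger0_norm ?subr_ge0 ?(le_trans t0 tu) //; ring.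
have -> : u + t *: ('e_k - 'e_j) = (u - t *: 'e_j) + t *: 'e_k.
  by rewrite scalerBr addrA addrAC.
by rewrite -split_j (le_trans (norm1D _ _)) // norm1Z norm1_delta mulr1 ger0_norm.
Qed.

Lemma norm2N u : norm2 (- u) = norm2 u.
Proof. by rewrite /norm2 dotNl dotNr opprK. Qed.

Lemma norm2_subZ_lt (b e : 'rV[R]_m) (t : R) : 0 < t -> t * dot e e < 2 * dot b e ->
  norm2 (b - t *: e) < norm2 b.
Proof.
move=> t0 small.
have expand : dot (b - t *: e) (b - t *: e) = dot b b - t * (2 * dot b e - t * dot e e).
  by rewrite !(dotDl, dotDr, dotNl, dotNr, dotZl, dotZr) (dotC e b); ring.
have lt : dot (b - t *: e) (b - t *: e) < dot b b.
  by rewrite expand ltrBlDr ltrDl mulr_gt0 // subr_gt0.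
by rewrite /norm2 ltr_sqrt ?(le_lt_trans (dot_ge0 _) lt).
Qed.

End Norms.

Section NeumannLaplacian.
Variable R : realFieldType.
Implicit Types w : nat -> R.

(* [lapN w N k] is the [k]-th entry of [D^* D w] for [w] on [0..N] (see [Dstar_Dop_row]): the
   Laplacian of the path [0..N] with Neumann boundary conditions. *)
Definition lapN w (N k : nat) : R :=
  (if k is k'.+1 then w k - w k' else 0) - (if (k < N)%N then w k.+1 - w k else 0).

Lemma lapN_const (c : R) N k : lapN (fun=> c) N k = 0.
Proof. by rewrite /lapN; case: k => [|k]; case: ifP; rewrite !subrr. Qed.

Lemma lapN_opp w N k : lapN (fun i => - w i) N k = - lapN w N k.
Proof. by rewrite /lapN; case: k => [|k]; case: ifP => _; rewrite ?opprB; ring. Qed.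

Lemma lapN_ge0 w N k :
  (k <= N)%N -> (forall i, (i <= N)%N -> w i <= w k) -> 0 <= lapN w N k.
Proof.
move=> kN wk; rewrite /lapN subr_ge0.
have tail : (if (k < N)%N then w k.+1 - w k else 0) <= 0.
  by case: ifP => // kN'; rewrite subr_le0 wk.
case: k kN wk tail => [|k] kN wk tail; first by [].
by rewrite (le_trans tail) // subr_ge0 wk // ltnW.
Qed.

Lemma lapN_le0 w N k :
  (k <= N)%N -> (forall i, (i <= N)%N -> w k <= w i) -> lapN w N k <= 0.
Proof.
move=> kN wk; rewrite -oppr_ge0 -lapN_opp lapN_ge0 // => i iN.
by rewrite lerN2 wk.
Qed.

Lemma lapN_eq w w' N k : (k < N)%N -> (forall i, (i <= k.+1)%N -> w' i = w i) ->
  lapN w' N.+1 k = lapN w N k.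
Proof.
move=> kN ww; rewrite /lapN ltnS (ltnW kN) kN !ww // ?leqnSn //.
by case: k kN ww => [|k] kN ww //; rewrite ww // ltnW.
Qed.

Lemma lapN_affine w p (d : R) N k : (p < k)%N -> (k < N)%N ->
  lapN (fun i => if (i <= p)%N then w i else w p + (i - p)%:R * d) N k = 0.
Proof.
move=> pk kN; rewrite /lapN kN.
case: k pk kN => [|k] // pk kN; rewrite leqNgt pk ltnNge (ltnW pk) /=.
case: leqP => [kp|pk']; last by rewrite !natrB; try lia; ring.
have -> : k = p by apply/eqP; rewrite eqn_leq kp -ltnS.
by rewrite !natrB; try lia; ring.
Qed.

End NeumannLaplacian.

Section HarmonicExtension.
Variables (R : realFieldType) (E : nat -> bool) (s : nat -> R).
Hypothesis s_bound : forall k, `|s k| <= 1.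

Definition harmonic_ext N (w : nat -> R) :=
  [/\ forall k, (k <= N)%N -> `|w k| <= 1,
      forall k, (k <= N)%N -> E k -> w k = s k &
      forall k, (k <= N)%N -> ~~ E k -> lapN w N k = 0].

Lemma harmonic_ext_first N : (forall k, (k < N)%N -> ~~ E k) -> E N ->
  harmonic_ext N (fun=> s N).
Proof.
move=> noE EN; split=> // [k kN Ek|k _ _]; last exact: lapN_const.
suff -> : k = N by [].
by apply/eqP; rewrite eqn_leq kN leqNgt; apply: contraTN Ek; apply: noE.
Qed.

Lemma harmonic_ext_const N w : harmonic_ext N w -> ~~ E N.+1 ->
  harmonic_ext N.+1 (fun k => w (minn k N)).
Proof.
move=> [wb wE wlap] nEN; split=> k kN.
- exact: wb (geq_minr k N).
- move=> Ek; have kN' : (k <= N)%N.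
    by move: kN; rewrite leq_eqVlt => /predU1P[kN1|//]; move: nEN; rewrite -kN1 Ek.
  by rewrite (minn_idPl kN') wE.
move=> nEk; have [kltN|NltK|kN'] := ltngtP k N.
- rewrite (lapN_eq (w := w)) ?wlap ?(ltnW kltN) // => i ik.
  by rewrite (minn_idPl _) // (leq_trans ik).
- have -> : k = N.+1 by apply/eqP; rewrite eqn_leq kN.
  by rewrite /lapN ltnn minnn (minn_idPr (leqnSn N)) !subrr.
subst k; have := wlap N (leqnn N) nEk.
rewrite /lapN ltnn ltnSn minnn (minn_idPr (leqnSn N)) !subrr !subr0 => <-.
by case: N {wb wE wlap nEN kN nEk} => [|N] //; rewrite (minn_idPl (leqnSn N)).
Qed.

Lemma harmonic_ext_affine N w p : harmonic_ext N w -> (p <= N)%N -> E p ->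
  (forall q, (p < q)%N -> (q <= N)%N -> ~~ E q) -> E N.+1 ->
  harmonic_ext N.+1 (fun i => if (i <= p)%N then w i
                              else w p + (i - p)%:R * ((s N.+1 - w p) / (N.+1 - p)%:R)).
Proof.
move=> [wb wE wlap] pN Ep pmax EN; set d := (s N.+1 - w p) / _.
have Np_gt0 : (0 : R) < (N.+1 - p)%:R by rewrite ltr0n subn_gt0 ltnS.
split=> k kN.
- case: leqP => [kp|pk]; first exact: wb (leq_trans kp pN).
  pose t : R := (k - p)%:R / (N.+1 - p)%:R.
  have t01 : 0 <= t <= 1.
    by rewrite divr_ge0 ?ler0n ?ler_pdivrMr // mul1r ler_nat leq_sub2r.
  have -> : w p + (k - p)%:R * d = (1 - t) * w p + t * s N.+1.
    by rewrite /d /t; field; rewrite gt_eqF.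
  move: (wb p pN) (s_bound N.+1) t01; rewrite !ler_norml.
  by move=> /andP[? ?] /andP[? ?] /andP[? ?]; apply/andP; split; nra.
- move=> Ek; case: leqP => [kp|pk]; first exact: wE (leq_trans kp pN) Ek.
  have -> : k = N.+1.
    by apply/eqP; rewrite eqn_leq kN leqNgt; apply: contraTN Ek; apply: pmax pk.
  by rewrite /d mulrC divfK ?gt_eqF // addrC subrK.
move=> nEk; have [kp|pk|kp] := ltngtP k p.
- have kN' : (k < N)%N := leq_trans kp pN.
  rewrite (lapN_eq (w := w)) ?wlap ?(ltnW kN') // => i ik.
  by rewrite (leq_trans ik kp).
- apply: lapN_affine pk _; rewrite ltn_neqAle kN andbT.
  by apply: contraNneq nEk => ->.
- by rewrite kp Ep in nEk.
Qed.

Lemma harmonic_extension N : (exists2 k, (k <= N)%N & E k) ->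
  exists w, harmonic_ext N w.
Proof.
elim: N => [|N IH] [k kN Ek].
  by exists (fun=> s 0); apply: harmonic_ext_first; move: kN Ek; rewrite leqn0 => /eqP->.
have [/existsP[q Eq]|/existsPn noE] := boolP [exists q : 'I_N.+1, E q]; last first.
  have lastE : forall j, (j < N.+1)%N -> ~~ E j by move=> j jN; apply: (noE (Ordinal jN)).
  exists (fun=> s N.+1); apply: harmonic_ext_first => //.
  by move: kN; rewrite leq_eqVlt => /predU1P[<- //|/lastE]; rewrite Ek.
have [w wP] := IH (ex_intro2 _ _ (val q) (ltn_ord q) Eq).
have [EN|nEN] := boolP (E N.+1); last by exists (fun k => w (minn k N)); apply: harmonic_ext_const.
have exP : exists i, (i <= N)%N && E i by exists q; rewrite Eq -ltnS ltn_ord.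
have ubP : forall i, (i <= N)%N && E i -> (i <= N)%N by move=> i /andP[].
have [p /andP[pN Ep] pmax] := ex_maxnP exP ubP.
eexists; apply: (harmonic_ext_affine wP pN Ep _ EN) => j pj jN.
by apply/negP => Ej; have := pmax j; rewrite jN Ej leqNgt pj => /(_ isT).
Qed.

End HarmonicExtension.

Section DifferenceOperators.
Variable R : rcfType.

(* Entries of a row vector indexed by [nat], with the junk value 0 past the end. *)
Definition coordn m (v : 'rV[R]_m) (k : nat) : R :=
  if insub k is Some i then v 0 i else 0.

Lemma coordnE m (v : 'rV[R]_m) (i : 'I_m) : coordn v i = v 0 i.
Proof. by rewrite /coordn valK. Qed.

Lemma coordn_row m (f : nat -> R) k :
  coordn (\row_(i < m) f i) k = if (k < m)%N then f k else 0.
Proof.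
rewrite /coordn; case: insubP => [i -> <-|/negbTE -> //].
by rewrite mxE.
Qed.

Lemma sum_coordn m (v : 'rV[R]_m) k : \sum_(i < m) v 0 i * (i == k :> nat)%:R = coordn v k.
Proof.
rewrite /coordn; case: insubP => [i _ <-|Hk].
  rewrite (bigD1 i) //= eqxx mulr1 big1 ?addr0 // => j Hj.
  by rewrite eqtype.val_eqE (negbTE Hj) mulr0.
rewrite big1 // => i _; case: eqP => [Ei|_]; last by rewrite mulr0.
by move: Hk; rewrite -Ei ltn_ord.
Qed.

Lemma Dop_coordn n (b : 'rV[R]_n.+1) (i : 'I_n) :
  (Dop b) 0 i = coordn b i.+1 - coordn b i.
Proof.
rewrite /Dop mxE -!sum_coordn -sumrB; apply: eq_bigr => j _.
by rewrite mxE mulrBr.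
Qed.

Lemma Dstar_coordn n (a : 'rV[R]_n) (j : 'I_n.+1) :
  (Dstar a) 0 j = (if j : nat is k.+1 then coordn a k else 0) - coordn a j.
Proof.
rewrite /Dstar mxE -sum_coordn.
have -> : (if j : nat is k.+1 then coordn a k else 0) =
          \sum_(i < n) a 0 i * (i.+1 == j :> nat)%:R.
  case: j => [[|k] Hk] /=; last by rewrite -sum_coordn.
  by rewrite big1 // => i _; rewrite mulr0.
rewrite -sumrB; apply: eq_bigr => i _.
by rewrite !mxE mulrBr -!val_eqE /= !(eq_sym (j : nat)).
Qed.

Lemma DopD n (b c : 'rV[R]_n.+1) : Dop (b + c) = Dop b + Dop c.
Proof. by rewrite /Dop mulmxDl. Qed.

Lemma DopN n (b : 'rV[R]_n.+1) : Dop (- b) = - Dop b.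
Proof. by rewrite /Dop mulNmx. Qed.

Lemma DopZ n k (b : 'rV[R]_n.+1) : Dop (k *: b) = k *: Dop b.
Proof. by rewrite /Dop scalemxAl. Qed.

Lemma DstarD n (a a' : 'rV[R]_n) : Dstar (a + a') = Dstar a + Dstar a'.
Proof. by rewrite /Dstar mulmxDl. Qed.

Lemma DstarN n (a : 'rV[R]_n) : Dstar (- a) = - Dstar a.
Proof. by rewrite /Dstar mulNmx. Qed.

Lemma DstarZ n k (a : 'rV[R]_n) : Dstar (k *: a) = k *: Dstar a.
Proof. by rewrite /Dstar scalemxAl. Qed.

Lemma dot_Dop n (a : 'rV[R]_n) (b : 'rV[R]_n.+1) : dot a (Dop b) = dot (Dstar a) b.
Proof. by rewrite !dot_mx /Dop /Dstar trmx_mul mulmxA. Qed.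

Definition step n (p : 'I_n.+1) : 'rV[R]_n := \row_(i < n) (p <= i)%N%:R.

Lemma Dstar_step n (p : 'I_n.+1) : Dstar (step p) = delta_mx 0 ord_max - delta_mx 0 p.
Proof.
apply/rowP => -[l Hl]; rewrite Dstar_coordn !mxE -!val_eqE /=.
have := ltn_ord p; case: l Hl => [|l] Hl Hp;
  rewrite /step !(coordn_row n (fun k => (p <= k)%:R)) /=;
  by do ![case: leqP => ? | case: eqP => ?]; rewrite ?subrr ?subr0 ?sub0r //; lia.
Qed.

Lemma Dstar_delta_sub n (j k : 'I_n.+1) :
  exists e : 'rV[R]_n, Dstar e = delta_mx 0 k - delta_mx 0 j.
Proof.
exists (step j - step k).
by rewrite DstarD DstarN !Dstar_step opprB addrC addrA subrK.
Qed.

Definition cumsum n (a : 'rV[R]_n) : 'rV[R]_n.+1 :=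
  \row_(j < n.+1) \sum_(i < n | (i < j)%N) a 0 i.

Lemma Dop_cumsum n (a : 'rV[R]_n) : Dop (cumsum a) = a.
Proof.
apply/rowP => i.
rewrite Dop_coordn /cumsum !(coordn_row n.+1 (fun j => \sum_(l < n | (l < j)%N) a 0 l)).
rewrite !ltnS ltn_ord (ltnW (ltn_ord i)) (bigD1 i) //=.
rewrite (eq_bigl (fun l : 'I_n => (l < i)%N)) ?addrK // => l.
by rewrite ltnS ltn_neqAle andbC.
Qed.

Lemma Dop_eq0 n (b : 'rV[R]_n.+1) : Dop b = 0 -> forall j, b 0 j = b 0 0.
Proof.
move=> b0 j; have [e De] := Dstar_delta_sub ord0 j.
have := dot_Dop e b; rewrite b0 De dotDl dotNl !dot_delta => /esym/eqP.
by rewrite dot0r subr_eq0 => /eqP.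
Qed.

Lemma Dstar_eq0 n (a : 'rV[R]_n) : Dstar a = 0 -> a = 0.
Proof.
move=> a0; apply: dot_eq0.
by rewrite -{2}(Dop_cumsum a) dot_Dop a0 dot0l.
Qed.

Lemma Dop_row n (w : nat -> R) :
  Dop (\row_(i < n.+1) w i) = \row_(i < n) (w i.+1 - w i).
Proof.
apply/rowP => i; rewrite Dop_coordn !(coordn_row n.+1 w) mxE.
by rewrite ltnS ltn_ord (leqW (ltn_ord i)).
Qed.

Lemma Dop_const n (t : R) : Dop (\row_(j < n.+1) t) = 0.
Proof. by rewrite (Dop_row n (fun=> t)); apply/rowP => i; rewrite !mxE subrr. Qed.

Lemma Dstar_Dop_row n (w : nat -> R) (j : 'I_n.+1) :
  (Dstar (Dop (\row_(i < n.+1) w i))) 0 j = lapN w n j.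
Proof.
rewrite Dop_row Dstar_coordn /lapN; case: j => -[|j] /= jn;
  rewrite !(coordn_row n (fun i => w i.+1 - w i)) //.
by rewrite (_ : (j < n)%N = true).
Qed.

Lemma normX_is_norm n : is_norm (@normX R n).
Proof.
split=> [x /norm1_eq0 /Dstar_eq0 //|k x|x y]; rewrite /normX.
  by rewrite DstarZ norm1Z.
by rewrite DstarD norm1D.
Qed.

Lemma normXN n (a : 'rV[R]_n) : normX (- a) = normX a.
Proof. by rewrite /normX DstarN norm1N. Qed.

End DifferenceOperators.

Section NormY.
Variable R : rcfType.

Definition balanced m (M : R) (b : 'rV[R]_m) : Prop :=
  [/\ forall j, `|b 0 j| <= M, exists j, b 0 j = M & exists j, b 0 j = - M].

Lemma balanced_norminf m M (b : 'rV[R]_m) : balanced M b -> norminf b = M.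
Proof.
move=> [bM [j bj] _]; apply/le_anti; rewrite norminf_le //=.
  by rewrite -bj (le_trans (ler_norm _)) ?ler_norminf.
by rewrite (le_trans _ (bM j)).
Qed.

Lemma exists_balanced_preimage n (a : 'rV[R]_n) :
  exists (b : 'rV[R]_n.+1) (M : R), Dop b = a /\ balanced M b.
Proof.
have := Dop_cumsum a; move: (cumsum a) => c Dc.
have [jM _ cM] := @arg_maxP _ R _ ord0 xpredT (fun j => c 0 j) isT.
have [jm _ cm] := @arg_minP _ R _ ord0 xpredT (fun j => c 0 j) isT.
pose mid := (c 0 jM + c 0 jm) / 2.
exists (c - \row_j mid), ((c 0 jM - c 0 jm) / 2); split.
  by rewrite DopD DopN Dop_const subr0.
split; [move=> j | exists jM | exists jm]; rewrite !mxE /mid; try by field.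
have h1 : c 0 j <= c 0 jM := cM j isT; have h2 := cm j isT.
by rewrite ler_norml; apply/andP; split; lra.
Qed.

Lemma balanced_norminf_min n M (b be : 'rV[R]_n.+1) :
  balanced M be -> Dop b = Dop be -> M <= norminf b.
Proof.
move=> [_ [jM eM] [jm em]] Db.
have /Dop_eq0 K : Dop (b - be) = 0 by rewrite DopD DopN Db subrr.
have := K jM; have := K jm; rewrite !mxE eM em.
set t := b 0 0 - be 0 0 => etm etM.
have [t0|t0] := lerP 0 t.
  by apply: le_trans (ler_norminf b jM); rewrite (le_trans _ (ler_norm _)) //; lra.
by apply: le_trans (ler_norminf b jm); rewrite -normrN (le_trans _ (ler_norm _)) //; lra.
Qed.

Lemma is_normY_balanced n M (b : 'rV[R]_n.+1) : balanced M b -> is_normY (Dop b) M.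
Proof.
move=> bM; split; first by exists b; rewrite (balanced_norminf bM).
by move=> b' /balanced_norminf_min; apply.
Qed.

Lemma is_normY_uniq n (a : 'rV[R]_n) y y' : is_normY a y -> is_normY a y' -> y = y'.
Proof. by move=> [[b [Db <-]] yb] [[b' [Db' <-]] y'b]; apply/le_anti; rewrite yb ?y'b. Qed.

(* [w] is the harmonic extension of the signs of [be] from its extremal points, so [D^* D w]
   vanishes elsewhere and has the sign of [be] there by the maximum principle. *)
Lemma balanced_sign_certificate n M (be : 'rV[R]_n.+1) :
  0 < M -> balanced M be ->
  exists w : 'rV[R]_n.+1,
    [/\ forall j, `|w 0 j| <= 1,
        forall j, be 0 j = M -> w 0 j = 1,
        forall j, be 0 j = - M -> w 0 j = -1 &
        forall j, (Dstar (Dop w)) 0 j * be 0 j = M * `|(Dstar (Dop w)) 0 j|].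
Proof.
move=> M0 [beM [jM eM] _].
pose E k := `|coordn be k| == M.
pose s k : R := if coordn be k == M then 1 else -1.
have s1 k : `|s k| <= 1 by rewrite /s; case: ifP; rewrite ?normrN normr1.
have M_ge0 := ltW M0.
have EjM : E jM by rewrite /E coordnE eM ger0_norm.
have [w [wb wE wlap]] := harmonic_extension s1 (ex_intro2 _ _ (val jM) (ltn_ord jM) EjM).
have jn (j : 'I_n.+1) : (j <= n)%N := ltn_ord j.
have MN : (- M == M) = false by apply/negbTE; rewrite eq_sym -addr_eq0 gt_eqF ?addr_gt0.
have w_top (j : 'I_n.+1) : be 0 j = M -> w j = 1.
  by move=> bj; rewrite wE ?jn // /s /E coordnE bj ?eqxx ?ger0_norm.
have w_bot (j : 'I_n.+1) : be 0 j = - M -> w j = -1.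
  by move=> bj; rewrite wE ?jn // /s /E coordnE bj ?MN ?normrN ?ger0_norm.
have wle i : (i <= n)%N -> -1 <= w i <= 1 by rewrite -ler_norml; apply: wb.
exists (\row_(j < n.+1) w j); split=> j; rewrite ?Dstar_Dop_row ?mxE;
  [exact: wb | exact: w_top | exact: w_bot |].
have [bj|bj] := eqVneq (be 0 j) M.
  have lap_ge0 : 0 <= lapN w n j.
    by apply: lapN_ge0 (jn j) _ => i /wle /andP[_]; rewrite w_top.
  by rewrite bj ger0_norm // mulrC.
have [bj'|bj'] := eqVneq (be 0 j) (- M).
  have lap_le0 : lapN w n j <= 0.
    by apply: lapN_le0 (jn j) _ => i /wle /andP[+ _]; rewrite w_bot.
  by rewrite bj' ler0_norm // !mulrN mulrC.
by rewrite wlap ?jn ?normr0 ?mul0r ?mulr0 // /E coordnE eqr_norml negb_and negb_or bj bj'.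
Qed.

End NormY.

Section Decompositions.
Variables (R : rcfType) (n : nat).
Implicit Types (a b c x y z : 'rV[R]_n).

Lemma decomp_certificate (NX NY : 'rV[R]_n -> R) c a b z (K : R) :
  c = a + b -> 0 < K ->
  dot a z = NX a -> (forall x, dot x z <= NX x) ->
  dot b z = NY b * K -> (forall y, dot y z <= NY y * K) ->
  is_decomp NX NY c a b.
Proof.
move=> cab K0 az xz bz yz; split=> // a' b' cab'.
have ineq : NX a + NY b * K <= NX a' + NY b' * K.
  by rewrite -az -bz -dotDl -cab cab' dotDl lerD.
have [|aa'] := ltrP (NX a) (NX a'); first by left.
have [|bb'] := ltrP (NY b) (NY b'); first by right; left.
have bK : NY b' * K <= NY b * K by rewrite ler_pM2r.
right; right; split; apply/le_anti; rewrite ?aa' ?bb' //=; first lra.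
by rewrite -(ler_pM2r K0); lra.
Qed.

Lemma decompN (NP NQ : 'rV[R]_n -> R) c a b :
  (forall x, NP (- x) = NP x) -> (forall x, NQ (- x) = NQ x) ->
  is_decomp NP NQ c a b -> is_decomp NP NQ (- c) (- a) (- b).
Proof.
move=> NPN NQN [cab dec]; split=> [|a' b' cab']; first by rewrite cab opprD.
have := dec (- a') (- b'); rewrite !NPN !NQN; apply.
by rewrite -opprD -cab' opprK.
Qed.

Lemma decomp_r0 (NX NY : 'rV[R]_n -> R) (c : 'rV[R]_n) :
  NY 0 = 0 -> (forall y, NY y <= 0 -> y = 0) -> is_decomp NX NY c c 0.
Proof.
move=> NY0 NYdef; split=> [|a' b' cab']; first by rewrite addr0.
have [|b'0] := ltrP (NY 0) (NY b'); first by right; left.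
have b'_0 : b' = 0 by apply: NYdef; rewrite -NY0.
by move: cab'; rewrite b'_0 addr0 => ->; right; right.
Qed.

(* Otherwise moving a small mass of [D^* a] from [j] to [k] keeps [normX a] and strictly
   shrinks [norm2 b], since [<e, b> = be k - be j > 0] for [D^* e = e_k - e_j]. *)
Lemma X2_decomp_Dstar_pos (c a b : 'rV[R]_n) (be : 'rV[R]_n.+1) j :
  is_decomp (@normX R n) (@norm2 R n) c a b -> Dop be = b ->
  0 < (Dstar a) 0 j -> forall k, be 0 k <= be 0 j.
Proof.
move=> [cab dec] Db aj k; rewrite leNgt; apply/negP => jk.
have [e De] := Dstar_delta_sub R j k.
have g0 : 0 < dot b e by rewrite dotC -Db dot_Dop De dotDl dotNl !dot_delta subr_gt0.
have ee0 := dot_ge0 e; set g := dot b e in g0 *; set ee := dot e e in ee0 *.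
have ee1 : 0 < ee + 1 by rewrite ltr_wpDl.
pose t := Num.min ((Dstar a) 0 j) (g / (ee + 1)).
have t0 : 0 < t by rewrite lt_min aj divr_gt0.
have small : t * ee < 2 * g.
  have tg : t * ee <= g / (ee + 1) * ee by rewrite ler_wpM2r // ge_min lexx orbT.
  have gg : g / (ee + 1) * ee <= g.
    by rewrite mulrAC ler_pdivrMr // ler_wpM2l ?(ltW g0) ?lerDl.
  lra.
have X_le : normX (a + t *: e) <= normX a.
  by rewrite /normX DstarD DstarZ De norm1_move_mass // (ltW t0) ge_min lexx.
have := dec (a + t *: e) (b - t *: e).
rewrite cab addrACA subrr addr0 => /(_ erefl) [|[|[_ b2]]].
- by rewrite ltNge X_le.
- by rewrite ltNge (ltW (norm2_subZ_lt t0 small)).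
- by have := norm2_subZ_lt t0 small; rewrite b2 ltxx.
Qed.

Lemma X2_decomp_Dstar_neg (c a b : 'rV[R]_n) (be : 'rV[R]_n.+1) j :
  is_decomp (@normX R n) (@norm2 R n) c a b -> Dop be = b ->
  (Dstar a) 0 j < 0 -> forall k, be 0 j <= be 0 k.
Proof.
move=> /(decompN (@normXN R n) (@norm2N R n)) dec Db aj k.
have Db' : Dop (- be) = - b by rewrite DopN Db.
have aj' : 0 < (Dstar (- a)) 0 j by rewrite DstarN mxE oppr_gt0.
by have := X2_decomp_Dstar_pos dec Db' aj' k; rewrite !mxE lerN2.
Qed.

End Decompositions.

Section DualNorms.
Variables (R : rcfType) (n : nat) (nY : 'rV[R]_n -> R).
Hypothesis nYP : forall a, is_normY a (nY a).

Lemma nY_le a b : Dop b = a -> nY a <= norminf b.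
Proof. by case: (nYP a) => _; apply. Qed.

Lemma nY_ge0 a : 0 <= nY a.
Proof. by have [[b [_ <-]] _] := nYP a; apply: norminf_ge0. Qed.

Lemma nY_balanced a : exists b, Dop b = a /\ balanced (nY a) b.
Proof.
have [b [M [<- bM]]] := exists_balanced_preimage a.
by exists b; rewrite (is_normY_uniq (nYP _) (is_normY_balanced bM)).
Qed.

Lemma nYZ_le k a : nY (k *: a) <= `|k| * nY a.
Proof.
have [[b [<- <-]] _] := nYP a.
exact: le_trans (nY_le (DopZ k b)) (norminfZ _ _).
Qed.

Lemma nY0 : nY 0 = 0.
Proof.
apply/le_anti; rewrite nY_ge0 andbT -(norminf0 R n.+1) nY_le //.
by rewrite /Dop mul0mx.
Qed.

Lemma nY_eq0 a : nY a = 0 -> a = 0.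
Proof.
move=> a0; have [[b [Db bY]] _] := nYP a; rewrite a0 in bY.
by rewrite -Db (norminf_eq0 bY) /Dop mul0mx.
Qed.

Lemma nY_is_norm : is_norm nY.
Proof.
split=> [|k a|a a']; first exact: nY_eq0.
- have [->|k0] := eqVneq k 0; first by rewrite scale0r nY0 normr0 mul0r.
  apply/le_anti; rewrite nYZ_le /= -{1}(scalerK k0 a).
  apply: le_trans (ler_wpM2l (normr_ge0 k) (nYZ_le _ _)) _.
  by rewrite normfV mulrA mulfV ?normr_eq0 // mul1r.
- have [[b [<- <-]] _] := nYP a; have [[b' [<- <-]] _] := nYP a'.
  exact: le_trans (nY_le (DopD b b')) (norminfD _ _).
Qed.

Lemma dot_le_normX_nY x y : dot x y <= normX x * nY y.
Proof.
have [[b [<- <-]] _] := nYP y.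
by rewrite dot_Dop dot_le_norm1_norminf.
Qed.

Lemma nY_dual : is_dual (@normX R n) nY.
Proof.
move=> y; split=> [_ [x [x1 ->]]|u ub].
  by rewrite (le_trans (dot_le_normX_nY _ _)) // ler_piMl ?nY_ge0.
have [b [Db [_ [jM bM] [jm bm]]]] := nY_balanced y.
have [e De] := Dstar_delta_sub R jm jM.
apply: ub; exists (2^-1 *: e); split.
  rewrite /normX DstarZ norm1Z De (le_trans (ler_wpM2l _ (norm1D _ _))) //.
  by rewrite norm1N !norm1_delta ger0_norm //; lra.
by rewrite dotZl -[y in dot e y]Db dot_Dop De dotDl dotNl !dot_delta bM bm; lra.
Qed.

Lemma normX_dual : is_dual nY (@normX R n).
Proof.
move=> y; split=> [_ [x [x1 ->]]|u ub].
  by rewrite dotC (le_trans (dot_le_normX_nY _ _)) // ler_piMr ?norm1_ge0.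
pose s := \row_j Num.sg ((Dstar y) 0 j).
apply: ub; exists (Dop s); split.
  apply: le_trans (nY_le (erefl _)) _; apply: norminf_le => // j.
  by rewrite mxE normr_sg lern1 leq_b1.
rewrite dotC dot_Dop; apply: eq_bigr => j _.
by rewrite [s 0 j]mxE normrEsg mulrC.
Qed.

Lemma tight_normX_nY c : tight (@normX R n) nY c.
Proof.
move=> a b dec; have [cab _] := dec.
have [b0|b_neq0] := eqVneq b 0.
  rewrite b0 addr0 in cab; rewrite b0 -cab; apply: decomp_r0 nY0 _ => y y0.
  by apply: nY_eq0; apply/le_anti; rewrite y0 nY_ge0.
have [be [Db bal]] := nY_balanced b.
have M0 : 0 < nY b.
  by rewrite lt_def nY_ge0 andbT; apply: contra_neq b_neq0; apply: nY_eq0.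
have [w [w1 w_top w_bot wcert]] := balanced_sign_certificate M0 bal.
have [beM [jM eM] [jm em]] := bal.
have top j : 0 < (Dstar a) 0 j -> be 0 j = nY b.
  move=> aj; apply/le_anti; rewrite (le_trans (ler_norm _) (beM j)) /=.
  by rewrite -{1}eM (X2_decomp_Dstar_pos dec Db aj).
have bot j : (Dstar a) 0 j < 0 -> be 0 j = - nY b.
  move=> aj; apply/le_anti; rewrite -{1}em (X2_decomp_Dstar_neg dec Db aj) /=.
  by have := beM j; rewrite ler_norml => /andP[].
apply: (decomp_certificate (z := Dop w) (K := normX (Dop w))) => //.
- rewrite lt_def norm1_ge0 andbT; apply/eqP => /norm1_eq0 /Dstar_eq0 /Dop_eq0 w_const.
  by have := w_const jM; rewrite -(w_const jm) w_top // w_bot //; lra.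
- rewrite dot_Dop; apply: eq_bigr => j _.
  have [aj|aj|->] := ltrgt0P ((Dstar a) 0 j); last by rewrite mul0r ?normr0.
    by rewrite w_top ?top ?mulr1 ?gtr0_norm.
  by rewrite w_bot ?bot ?mulrN1 ?ltr0_norm.
- move=> x; rewrite dot_Dop (le_trans (dot_le_norm1_norminf _ _)) //.
  by rewrite ler_piMr ?norm1_ge0 // norminf_le.
- rewrite dotC -{1}Db dot_Dop mulr_sumr; apply: eq_bigr => j _; exact: wcert.
- by move=> y; rewrite dotC mulrC dot_le_normX_nY.
Qed.

End DualNorms.

Theorem mainTheorem17 (R : rcfType) (n : nat) :
  (forall a : 'rV[R]_n, exists y : R, is_normY a y) /\
  (forall nY : 'rV[R]_n -> R, (forall a, is_normY a (nY a)) ->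
    [/\ is_norm (@normX R n), is_norm nY,
        is_dual (@normX R n) nY, is_dual nY (@normX R n) &
        forall c : 'rV[R]_n, tight (@normX R n) nY c]).
Proof.
split=> [a|nY nYP].
  have [b [M [<- bM]]] := exists_balanced_preimage a.
  by exists M; apply: is_normY_balanced.
split; [exact: normX_is_norm | exact: nY_is_norm | exact: nY_dual |
        exact: normX_dual | exact: tight_normX_nY].
Qed.
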